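(* Let $n\ge 2$ be an integer. For $i=1,2$ let $X_{i1},\dots,X_{in}$ be a random sample from the density $f(x\mid\mu_i,\sigma)=\frac{1}{\sigma}e^{-(x-\mu_i)/\sigma}$ for $x\ge\mu_i$ (and $0$ otherwise), the two samples independent, with $\underline{\theta}=(\mu_1,\mu_2,\sigma)\in\mathbb{R}^2\times(0,\infty)$ unknown. Let $X_i=\min_j X_{ij}$, $S=\sum_{i=1}^2\sum_{j=1}^n(X_{ij}-X_i)$, $Z_2=\max\{X_1,X_2\}$, and $\mu_M=\mu_1I(X_1\ge X_2)+\mu_2I(X_1<X_2)$. Consider the loss $L(\underline{\theta},a)=\left(\frac{a-\mu_M}{\sigma}\right)^2$, $a\in\mathbb{R}$, and the non-informative prior density $\pi(\mu_1,\mu_2,\sigma)=\frac{1}{\sigma}$ on $\mathbb{R}^2\times(0,\infty)$. Then the generalized Bayes estimator of $\mu_M$ with respect to this prior and loss is $$\delta_{k_2}=Z_2-\frac{S}{n(2n-1)}.$$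
   Context: $I(A)$ is the indicator of $A$. Given the observed data, the (formal) posterior density is proportional to prior times likelihood; for the sufficient statistic $(x_1,x_2,s)=(X_1,X_2,S)$ it is proportional to $\sigma^{-(2n+1)}e^{-n(x_1-\mu_1)/\sigma}e^{-n(x_2-\mu_2)/\sigma}e^{-s/\sigma}$ on $\{\mu_1\le x_1,\mu_2\le x_2,\sigma>0\}$. The generalized Bayes estimator is the action $a$ minimizing the posterior expected loss $\int\left(\frac{a-\mu_M}{\sigma}\right)^2\pi(\underline{\theta}\mid\text{data})\,d\underline{\theta}$ (with $\mu_M$ evaluated at the observed $X_1,X_2$), namely the ratio $\int \mu_M\sigma^{-2}\pi(\underline{\theta}\mid\text{data})d\underline{\theta}\big/\int\sigma^{-2}\pi(\underline{\theta}\mid\text{data})d\underline{\theta}$. *)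

From HB Require Import structures.
From mathcomp Require Import all_boot all_order all_algebra.
From mathcomp Require Import all_classical all_reals all_analysis.
Set Implicit Arguments. Unset Strict Implicit. Unset Printing Implicit Defensive.
Import Order.TTheory GRing.Theory Num.Theory.
Local Open Scope classical_set_scope.
Local Open Scope ring_scope.

(* Samples are indexed by nat; only the indices 0 <= j < n are used.
   Sample i (i = 1,2) is x_i 0, ..., x_i (n-1). *)

Section Model.
Variable R : realType.

Definition expdens (mu sigma x : R) : R :=
  if mu <= x then sigma^-1 * expR (- ((x - mu) / sigma)) else 0.

Definition smin (n : nat) (x : nat -> R) : R :=
  \big[Num.min/x 0%N]_(0 <= j < n) x j.

Definition Sstat (n : nat) (x1 x2 : nat -> R) : R :=
  \sum_(0 <= j < n) (x1 j - smin n x1) + \sum_(0 <= j < n) (x2 j - smin n x2).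

Definition Z2 (n : nat) (x1 x2 : nat -> R) : R := Num.max (smin n x1) (smin n x2).

Definition muM (n : nat) (x1 x2 : nat -> R) (mu1 mu2 : R) : R :=
  if smin n x2 <= smin n x1 then mu1 else mu2.

Definition loss (n : nat) (x1 x2 : nat -> R) (mu1 mu2 sigma a : R) : R :=
  ((a - muM n x1 x2 mu1 mu2) / sigma) ^+ 2.

Definition prior (mu1 mu2 sigma : R) : R := sigma^-1.

Definition lik (n : nat) (x1 x2 : nat -> R) (mu1 mu2 sigma : R) : R :=
  (\prod_(0 <= j < n) expdens mu1 sigma (x1 j)) *
  (\prod_(0 <= j < n) expdens mu2 sigma (x2 j)).

(* integral over the parameter space R^2 x (0,oo) w.r.t. Lebesgue measure,
   written as an iterated integral (sigma outermost) *)
Definition param_integral (g : R -> R -> R -> R) : \bar R :=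
  (\int[lebesgue_measure]_(sigma in [set s : R | (0 < s)%R])
     \int[lebesgue_measure]_(mu1 in [set: R])
       \int[lebesgue_measure]_(mu2 in [set: R]) (g mu1 mu2 sigma)%:E)%E.

Definition marginal (n : nat) (x1 x2 : nat -> R) : R :=
  fine (param_integral (fun mu1 mu2 sigma => prior mu1 mu2 sigma * lik n x1 x2 mu1 mu2 sigma)).

Definition posterior (n : nat) (x1 x2 : nat -> R) (mu1 mu2 sigma : R) : R :=
  prior mu1 mu2 sigma * lik n x1 x2 mu1 mu2 sigma / marginal n x1 x2.

Definition post_exp_loss (n : nat) (x1 x2 : nat -> R) (a : R) : \bar R :=
  param_integral (fun mu1 mu2 sigma =>
    loss n x1 x2 mu1 mu2 sigma a * posterior n x1 x2 mu1 mu2 sigma).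

Definition delta_k2 (n : nat) (x1 x2 : nat -> R) : R :=
  Z2 n x1 x2 - Sstat n x1 x2 / (n%:R * (2 * n%:R - 1)).

End Model.

From HB Require Import structures.
From mathcomp Require Import all_boot all_order all_algebra.
From mathcomp Require Import all_classical all_reals all_analysis.
From mathcomp Require Import ring lra measurable_realfun.
Import Order.TTheory GRing.Theory Num.Theory.
Import numFieldNormedType.Exports.
Local Open Scope classical_set_scope.
Local Open Scope ring_scope.

(* Given the data, the likelihood factors as
     sigma^-(2n) e^(-S/sigma) * t(mu1; X1) * t(mu2; X2),
     t(mu; X) = e^(n (mu - X)/sigma) 1[mu <= X],
   so that, given sigma, mu1 and mu2 are independent with X_i - mu_i exponential of
   rate n/sigma.  Whichever of mu1, mu2 is mu_M lives below Z2, hence the conditional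
   risk of an action a is E (a - Z2 + T)^2 / sigma^2 with T ~ Exp(n/sigma), a quadratic
   in a with coefficients that are powers of sigma.  Integrating them against the
   marginal posterior of sigma, proportional to sigma^-(2n-1) e^(-S/sigma), uses only
     int_0^oo s^-(j+2) e^(-S/s) ds = j!/S^(j+1),
   and the posterior risk becomes a quadratic in a with positive leading coefficient
   whose vertex is Z2 - S/(n(2n-1)). *)

Section ExpDecay.
Context {R : realType}.

Lemma expRN_le_fact (j : nat) {y : R} : 0 < y -> expR (- y) <= j.+1`!%:R / y ^+ j.+1.
Proof.
move=> y0; rewrite expRN.
have yj0 : 0 < y ^+ j.+1 / j.+1`!%:R by rewrite divr_gt0 ?exprn_gt0 ?ltr0n ?fact_gt0.
rewrite -[_ / y ^+ _]invf_div lef_pV2 ?posrE ?expR_gt0 //.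
by apply: le_trans (@expR_ge1Dxn R y j (ltW y0)); rewrite lerDr.
Qed.

Lemma cvgy_invr : (fun x : R => x^-1) @ +oo --> 0.
Proof.
apply/(@gtr0_cvgV0 _ _ _ _ (fun x : R => x)); last exact: cvg_id.
by near=> x; near: x; exact: nbhs_pinfty_gt.
Unshelve. all: by end_near. Qed.

Lemma cvg0_exprV_expRNdiv (j : nat) (S : R) : 0 < S ->
  (fun s : R => s^-1 ^+ j * expR (- (S / s))) @ 0^'+ --> 0.
Proof.
move=> S0; set C := j.+1`!%:R / S ^+ j.+1.
apply: (@squeeze_cvgr _ _ _ _ (fun _ => 0) (fun s => C * s)); last 2 first.
- exact: cvg_cst.
- apply: cvg_at_right_filter; rewrite -[X in _ --> X](mulr0 C).
  exact: cvgMl_tmp cvg_id.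
near=> s; have s0 : 0 < s by near: s; exact: nbhs_right_gt.
have sj0 : 0 <= s^-1 ^+ j by rewrite exprn_ge0 // invr_ge0 ltW.
apply/andP; split; first by rewrite mulr_ge0 ?expR_ge0.
apply: le_trans (ler_wpM2l sj0 (expRN_le_fact j (divr_gt0 S0 s0))) _.
rewrite /C expr_div_n exprVn !exprSr le_eqVlt; apply/orP; left; apply/eqP.
by field; rewrite !expf_neq0 ?gt_eqF.
Unshelve. all: by end_near. Qed.

Lemma cvgy_exprn_expRNmul (j : nat) (c : R) : 0 < c ->
  (fun x : R => x ^+ j * expR (- (c * x))) @ +oo --> 0.
Proof.
move=> c0; set C := j.+1`!%:R / c ^+ j.+1.
apply: (@squeeze_cvgr _ _ _ _ (fun _ => 0) (fun x => C * x^-1)); last 2 first.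
- exact: cvg_cst.
- by rewrite -[X in _ --> X](mulr0 C); exact: cvgMl_tmp cvgy_invr.
near=> x; have x0 : 0 < x by near: x; exact: nbhs_pinfty_gt.
have xj0 : 0 <= x ^+ j by rewrite exprn_ge0 // ltW.
apply/andP; split; first by rewrite mulr_ge0 ?expR_ge0.
apply: le_trans (ler_wpM2l xj0 (expRN_le_fact j (mulr_gt0 c0 x0))) _.
rewrite /C exprMn !exprSr le_eqVlt; apply/orP; left; apply/eqP.
by field; rewrite !expf_neq0 ?gt_eqF.
Unshelve. all: by end_near. Qed.

End ExpDecay.

Section PointwiseDerivative.
Context {R : realType}.
Implicit Types (f g : R -> R) (x a b k : R).

Lemma is_derive1_ext {f g x a b} :
  is_derive x 1 f a -> f =1 g -> a = b -> is_derive x 1 g b.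
Proof. by move=> h /funext <- <-. Qed.

Lemma is_derive1_add {f g x a b} : is_derive x 1 f a -> is_derive x 1 g b ->
  is_derive x 1 (fun t => f t + g t) (a + b).
Proof. by move=> hf hg; apply: is_derive1_ext (is_deriveD hf hg) _ _. Qed.

Lemma is_derive1_mul {f g x a b} : is_derive x 1 f a -> is_derive x 1 g b ->
  is_derive x 1 (fun t => f t * g t) (f x * b + g x * a).
Proof. by move=> hf hg; apply: is_derive1_ext (is_deriveM hf hg) _ _. Qed.

Lemma is_derive1_scale k {f x a} : is_derive x 1 f a ->
  is_derive x 1 (fun t => k * f t) (k * a).
Proof. by move=> hf; apply: is_derive1_ext (is_deriveZ k hf) _ _. Qed.

Lemma is_derive1_opp {f x a} : is_derive x 1 f a -> is_derive x 1 (fun t => - f t) (- a).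
Proof. by move=> hf; apply: is_derive1_ext (is_deriveN hf) _ _. Qed.

Lemma is_derive1_exprn (j : nat) {f x a} : is_derive x 1 f a ->
  is_derive x 1 (fun t => f t ^+ j) (j%:R * f x ^+ j.-1 * a).
Proof.
by move=> hf; apply: is_derive1_ext (is_deriveX j hf) _ _ => // t; rewrite exprfctE.
Qed.

Lemma is_derive1_expR {f x a} : is_derive x 1 f a ->
  is_derive x 1 (fun t => expR (f t)) (expR (f x) * a).
Proof. by move=> hf; exact: is_derive1_comp (is_derive_expR _) hf. Qed.

Lemma is_derive1_invr {x} : x != 0 -> is_derive x 1 (fun t : R => t^-1) (- (x ^+ 2)^-1).
Proof.
move=> x0; apply: is_derive_eq (is_deriveV x0 (is_derive_id x 1)) _.
by rewrite /= scaler1.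
Qed.

Lemma is_derive1_continuous {f x a} : is_derive x 1 f a -> {for x, continuous f}.
Proof. by case=> df _; exact/differentiable_continuous/derivable1_diffP. Qed.

End PointwiseDerivative.

Section InverseGammaIntegral.
Context {R : realType} (S : R).
Hypothesis S_gt0 : 0 < S.
Implicit Types (s : R) (j m : nat).

(* The kernel [s^-j e^(-S/s)], extended by 0 to [s <= 0] so that it is
   continuous on [0, +oo[. *)
Definition ig_exp (s : R) : R := if 0 < s then expR (- (S / s)) else 0.
Definition ig_kernel (j : nat) (s : R) : R := s^-1 ^+ j * ig_exp s.

Lemma ig_kernelE j s : 0 < s -> ig_kernel j s = s^-1 ^+ j * expR (- (S / s)).
Proof. by move=> s0; rewrite /ig_kernel /ig_exp s0. Qed.

Lemma ig_kernel_ge0 j s : 0 <= ig_kernel j s.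
Proof.
rewrite /ig_kernel /ig_exp; case: ifPn => [s0|_]; last by rewrite mulr0.
by rewrite mulr_ge0 ?expR_ge0 // exprn_ge0 // invr_ge0 ltW.
Qed.

Lemma ig_exp0 : ig_exp 0 = 0. Proof. by rewrite /ig_exp ltxx. Qed.

Lemma ig_kernel0 j : ig_kernel j 0 = 0. Proof. by rewrite /ig_kernel ig_exp0 mulr0. Qed.

Lemma is_derive_ig_exp {s} : 0 < s -> is_derive s 1 ig_exp (S * ig_kernel 2 s).
Proof.
move=> s0.
have near_expR : \near s, expR (- (S / s)) = ig_exp s.
  near=> t; have t0 : 0 < t by near: t; exact: lt_nbhsr.
  by rewrite /ig_exp t0.
apply: near_eq_is_derive near_expR _.
have dinv := is_derive1_invr (lt0r_neq0 s0).
apply: is_derive1_ext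
  (is_derive1_expR (is_derive1_opp (is_derive1_scale S dinv))) _ _ => //.
by rewrite ig_kernelE // exprVn; ring.
Unshelve. all: by end_near. Qed.

Lemma is_derive_ig_kernel j {s} : 0 < s ->
  is_derive s 1 (ig_kernel j) (S * ig_kernel j.+2 s - j%:R * ig_kernel j.+1 s).
Proof.
move=> s0; have sN0 := lt0r_neq0 s0.
have dpow := is_derive1_exprn j (is_derive1_invr sN0).
apply: is_derive1_ext (is_derive1_mul dpow (is_derive_ig_exp s0)) _ _ => //.
rewrite /ig_kernel; case: j {dpow} => [|j] /=; first by rewrite !expr0; ring.
by rewrite !exprS expr0; move: (s^-1 ^+ j) => u; field.
Qed.

(* Antiderivative of [ig_kernel m.+2], by induction from
   [d/ds ig_kernel j = S * ig_kernel j.+2 - j * ig_kernel j.+1]. *)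
Fixpoint ig_primitive (m : nat) (s : R) : R :=
  if m is m'.+1 then (ig_kernel m s + m%:R * ig_primitive m' s) / S else ig_exp s / S.

Definition ig_mass (m : nat) : R := m`!%:R / S ^+ m.+1.

Lemma ig_massS m : ig_mass m.+1 = m.+1%:R / S * ig_mass m.
Proof.
by rewrite /ig_mass factS natrM exprS invfM; ring.
Qed.

Lemma ig_mass_gt0 m : 0 < ig_mass m.
Proof. by rewrite divr_gt0 ?exprn_gt0 // ltr0n fact_gt0. Qed.

Lemma is_derive_ig_primitive m {s} : 0 < s ->
  is_derive s 1 (ig_primitive m) (ig_kernel m.+2 s).
Proof.
move=> s0; have SN0 := lt0r_neq0 S_gt0.
elim: m => [|m IH] /=.
  apply: is_derive1_ext (is_derive1_scale S^-1 (is_derive_ig_exp s0)) _ _.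
    by move=> t; rewrite mulrC.
  by rewrite mulrA mulVf ?mul1r.
have := is_derive1_scale S^-1
  (is_derive1_add (is_derive_ig_kernel m.+1 s0) (is_derive1_scale m.+1%:R IH)).
by move/is_derive1_ext; apply => [t|]; [rewrite mulrC | field].
Qed.

Lemma ig_primitive0 m : ig_primitive m 0 = 0.
Proof.
by elim: m => [|m IH] /=; rewrite ?ig_exp0 ?ig_kernel0 ?IH ?mulr0 ?addr0 ?mul0r.
Qed.

Lemma ig_exp_cvgy : ig_exp s @[s --> +oo%R] --> (1 : R).
Proof.
have near_expR : {near +oo, (fun s => expR (- (S / s))) =1 ig_exp}.
  near=> s; have s0 : 0 < s by near: s; exact: nbhs_pinfty_gt.
  by rewrite /ig_exp s0.
apply: cvg_trans (near_eq_cvg near_expR) _.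
rewrite -expR0; apply: (cvg_comp _ expR); last exact: continuous_expR.
rewrite -oppr0 -(mulr0 S); apply: cvgN; apply: cvgMl_tmp; exact: cvgy_invr.
Unshelve. all: by end_near. Qed.

Lemma ig_kernel_cvgy j : ig_kernel j.+1 s @[s --> +oo%R] --> 0.
Proof.
elim: j => [|j IH].
  under eq_fun do rewrite /ig_kernel expr1.
  by rewrite -(mul0r 1); exact: cvgM cvgy_invr ig_exp_cvgy.
under eq_fun do rewrite /ig_kernel exprS -mulrA.
by rewrite -(mul0r 0); exact: cvgM cvgy_invr IH.
Qed.

Lemma ig_primitive_cvgy m : ig_primitive m s @[s --> +oo%R] --> ig_mass m.
Proof.
elim: m => [|m IH] /=.
  have -> : ig_mass 0 = 1 * S^-1 by rewrite /ig_mass expr1.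
  exact: cvgMr_tmp ig_exp_cvgy.
have -> : ig_mass m.+1 = (0 + m.+1%:R * ig_mass m) / S by rewrite ig_massS; ring.
apply: cvgMr_tmp; apply: cvgD; [exact: ig_kernel_cvgy | exact: cvgMl_tmp IH].
Qed.

Lemma ig_kernel_cvg0 j : ig_kernel j s @[s --> 0^'+] --> 0.
Proof.
have near_kernel : {near 0^'+, (fun s => s^-1 ^+ j * expR (- (S / s))) =1 ig_kernel j}.
  near=> s; have s0 : 0 < s by near: s; exact: nbhs_right_gt.
  by rewrite ig_kernelE.
apply: cvg_trans (near_eq_cvg near_kernel) _.
exact: cvg0_exprV_expRNdiv.
Unshelve. all: by end_near. Qed.

Lemma ig_primitive_cvg0 m : ig_primitive m s @[s --> 0^'+] --> 0.
Proof.
elim: m => [|m IH] /=; rewrite -[X in _ --> X](mul0r S^-1); apply: cvgMr_tmp.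
  have -> : ig_exp = ig_kernel 0 by apply/funext => t; rewrite /ig_kernel expr0 mul1r.
  exact: ig_kernel_cvg0.
rewrite -[X in _ --> X](addr0 0); apply: cvgD; first exact: ig_kernel_cvg0.
by rewrite -[X in _ --> X](mulr0 m.+1%:R); exact: cvgMl_tmp IH.
Qed.

(* Stated for a whole combination, whose coefficients need not be nonnegative,
   because the integral is only computed for nonnegative integrands. *)
Lemma ge0_integral_ig_comb m (A B C : R) (f : R -> R) :
  (forall s, 0 < s ->
    f s = A * ig_kernel m.+4 s + B * ig_kernel m.+3 s + C * ig_kernel m.+2 s) ->
  (forall s, 0 < s -> 0 <= f s) ->
  (\int[lebesgue_measure]_(s in [set s : R | (0 < s)%R]) (f s)%:E =
    (A * ig_mass m.+2 + B * ig_mass m.+1 + C * ig_mass m)%:E)%E.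
Proof.
move=> fE f_ge0.
pose g s := A * ig_kernel m.+4 s + B * ig_kernel m.+3 s + C * ig_kernel m.+2 s.
pose G s := A * ig_primitive m.+2 s + B * ig_primitive m.+1 s + C * ig_primitive m s.
have dG s : 0 < s -> is_derive s 1 G (g s).
  move=> s0; apply: is_derive1_add (is_derive1_scale C (is_derive_ig_primitive m s0)).
  exact: is_derive1_add (is_derive1_scale A (is_derive_ig_primitive m.+2 s0))
                        (is_derive1_scale B (is_derive_ig_primitive m.+1 s0)).
have cg s : 0 < s -> {for s, continuous g}.
  move=> s0; apply: is_derive1_continuous.
  apply: is_derive1_add (is_derive1_scale C (is_derive_ig_kernel m.+2 s0)).
  exact: is_derive1_add (is_derive1_scale A (is_derive_ig_kernel m.+4 s0))
                        (is_derive1_scale B (is_derive_ig_kernel m.+3 s0)).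
have zero3 : A * 0 + B * 0 + C * 0 = 0 :> R by rewrite !mulr0 !addr0.
have g0 : g 0 = 0 by rewrite /g !ig_kernel0.
have G0 : G 0 = 0 by rewrite /G !ig_primitive0.
have -> : [set s : R | 0 < s] = `]0, +oo[%classic.
  by apply/seteqP; split => x /=; rewrite in_itv /= andbT.
transitivity (\int[lebesgue_measure]_(s in `]0%R, +oo[) (g s)%:E)%E.
  by apply: eq_integral => s; rewrite inE /= in_itv /= andbT => s0; rewrite fE.
rewrite integral_itv_obnd_cbnd; last first.
  apply/measurable_EFinP; apply: open_continuous_measurable_fun; first exact: interval_open.
  by move=> x; rewrite inE /= in_itv /= andbT; exact: cg.
rewrite (@ge0_continuous_FTC2y _ g G 0
  (A * ig_mass m.+2 + B * ig_mass m.+1 + C * ig_mass m)) ?G0 ?sube0 //.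
- move=> x; rewrite le_eqVlt => /predU1P[<-|x0]; first by rewrite g0.
  by rewrite /g -fE // f_ge0.
- apply/continuous_within_itvcyP; split.
    by move=> x; rewrite in_itv /= andbT; exact: cg.
  rewrite g0 -[X in _ --> X]zero3.
  by apply: cvgD; first apply: cvgD; apply: cvgMl_tmp; exact: ig_kernel_cvg0.
- by apply: cvgD; first apply: cvgD; apply: cvgMl_tmp; exact: ig_primitive_cvgy.
- by move=> x /dG [].
- rewrite -[X in _ --> X]zero3.
  by apply: cvgD; first apply: cvgD; apply: cvgMl_tmp; exact: ig_primitive_cvg0.
- move=> x; rewrite in_itv /= andbT => x0.
  by rewrite derive1E; case: (dG x x0) => _ ->.
Qed.

End InverseGammaIntegral.

Arguments ig_mass_gt0 {R S} S_gt0 m.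
Arguments ge0_integral_ig_comb {R S} S_gt0 m A B C f.

Section ExponentialTail.
Context {R : realType}.
Implicit Types (K p q b c d X mu : R).

Definition exp_tail c X mu : R := if mu <= X then expR (c * (mu - X)) else 0.

Definition quad_tail p q b c X mu : R := (p + q * (b - mu) ^+ 2) * exp_tail c X mu.

(* [E (d + T)^2] for an exponential random variable [T] of rate [c]. *)
Definition exp_sqmean c d : R := d ^+ 2 + 2 * d / c + 2 / c ^+ 2.

Lemma exp_sqmean_ge0 c d : 0 < c -> 0 <= exp_sqmean c d.
Proof.
move=> c0; have -> : exp_sqmean c d = (d + c^-1) ^+ 2 + c^-1 ^+ 2.
  by rewrite /exp_sqmean; field; exact: lt0r_neq0.
by rewrite addr_ge0 ?sqr_ge0.
Qed.

Lemma exp_tail_ge0 c X mu : 0 <= exp_tail c X mu.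
Proof. by rewrite /exp_tail; case: ifP => // _; exact: expR_ge0. Qed.

Lemma quad_tail_ge0 p q b c X mu : 0 <= p -> 0 <= q -> 0 <= quad_tail p q b c X mu.
Proof.
by move=> p0 q0; rewrite mulr_ge0 ?exp_tail_ge0 // addr_ge0 // mulr_ge0 // sqr_ge0.
Qed.

Lemma integral_quad_tail K p q b c X : 0 < c -> 0 <= K -> 0 <= p -> 0 <= q ->
  (\int[lebesgue_measure]_(mu in [set: R]) (K * quad_tail p q b c X mu)%:E =
    (K * ((p + q * exp_sqmean c (b - X)) / c))%:E)%E.
Proof.
move=> c0 K0 p0 q0; have cN0 := lt0r_neq0 c0.
pose g mu := K * ((p + q * (b - mu) ^+ 2) * expR (c * (mu - X))).
have g_ge0 mu : 0 <= g mu.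
  by rewrite mulr_ge0 // mulr_ge0 ?expR_ge0 // addr_ge0 // mulr_ge0 // sqr_ge0.
have cg x : {for x, continuous g} by apply: is_derive1_continuous.
transitivity (\int[lebesgue_measure]_(mu in `]-oo, X]) (g mu)%:E)%E.
  rewrite [RHS]integral_mkcond; apply: eq_integral => mu _.
  rewrite patchE /quad_tail /exp_tail; case: (leP mu X) => h.
    by rewrite mem_set //= in_itv /= h.
  by rewrite memNset ?mulr0 //= in_itv /= leNgt h.
rewrite -[u in `]-oo, u]](opprK X) ge0_integration_by_substitutionNy; last 2 first.
- exact: continuous_subspaceT.
- by move=> x _; exact: g_ge0.
(* [P] solves [c * P - P' = p + q * (b + t)^2], so that [G' = g (- t)]. *)
pose P t := p / c + q * (c^-1 * (b + t) ^+ 2 + 2 / c ^+ 2 * (b + t) + 2 / c ^+ 3).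
pose G t := - K * (expR (c * (- t - X)) * P t).
have dG (x : R) : is_derive x 1 G ((g \o -%R) x).
  have dexp := is_derive1_expR (is_derive1_scale c
    (is_derive1_add (is_derive1_opp (is_derive_id x 1))
                    (is_derive1_opp (is_derive_cst X x 1)))).
  have dlin := is_derive1_add (is_derive_cst b x 1) (is_derive_id x 1).
  have dP := is_derive1_add (is_derive_cst (p / c) x 1) (is_derive1_scale q
    (is_derive1_add (is_derive1_add (is_derive1_scale c^-1 (is_derive1_exprn 2 dlin))
      (is_derive1_scale (2 / c ^+ 2) dlin)) (is_derive_cst (2 / c ^+ 3) x 1))).
  apply: is_derive1_ext (is_derive1_scale (- K) (is_derive1_mul dexp dP)) _ _ => //.
  by rewrite /g /P /= opprK; field.
rewrite (@ge0_continuous_FTC2y _ (g \o -%R) G (- X) 0).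
- rewrite sub0e -EFinN /G /P opprK subrr mulr0 expR0 mul1r; congr EFin.
  by rewrite /exp_sqmean; field.
- by move=> x _; exact: g_ge0.
- apply: continuous_subspaceT => x; apply: continuous_comp; last exact: cg.
  exact: opp_continuous.
- have -> : G = fun t => - K * expR (- (c * X)) *
     ((p / c + q * (c^-1 * b ^+ 2 + 2 / c ^+ 2 * b + 2 / c ^+ 3))
        * (t ^+ 0 * expR (- (c * t))) +
      q * (2 * b / c + 2 / c ^+ 2) * (t ^+ 1 * expR (- (c * t))) +
      q / c * (t ^+ 2 * expR (- (c * t)))).
    apply/funext => t; rewrite /G /P.
    have -> : c * (- t - X) = - (c * X) + - (c * t) by ring.
    by rewrite expRD; move: (expR (- (c * X))) (expR (- (c * t))) => e1 e2; field.
  rewrite -[X in _ --> X](mulr0 (- K * expR (- (c * X)))); apply: cvgMl_tmp.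
  rewrite -[X in _ --> X](addr0 0) -[X in _ --> X + _](addr0 0).
  have cvgy_monomial a j : a * (t ^+ j * expR (- (c * t))) @[t --> +oo] --> 0.
    by rewrite -[X in _ --> X](mulr0 a); apply: cvgMl_tmp; exact: cvgy_exprn_expRNmul.
  by apply: cvgD; [apply: cvgD|]; exact: cvgy_monomial.
- by move=> x _; case: (dG x).
- by apply: cvg_at_right_filter; exact: is_derive1_continuous (dG _).
- by move=> x _; rewrite derive1E; case: (dG x) => _ ->.
Qed.

Lemma integral2_quad_tail (F : R -> R -> R) K p1 q1 b1 X1 p2 q2 b2 X2 c :
  0 < c -> 0 <= K -> 0 <= p1 -> 0 <= q1 -> 0 <= p2 -> 0 <= q2 ->
  (forall mu1 mu2,
    F mu1 mu2 = K * quad_tail p1 q1 b1 c X1 mu1 * quad_tail p2 q2 b2 c X2 mu2) ->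
  (\int[lebesgue_measure]_(mu1 in [set: R]) \int[lebesgue_measure]_(mu2 in [set: R])
     (F mu1 mu2)%:E =
   (K * ((p1 + q1 * exp_sqmean c (b1 - X1)) / c)
      * ((p2 + q2 * exp_sqmean c (b2 - X2)) / c))%:E)%E.
Proof.
move=> c0 K0 p10 q10 p20 q20 FE.
set I2 := (p2 + q2 * exp_sqmean c (b2 - X2)) / c.
have I20 : 0 <= I2.
  by apply: divr_ge0 (ltW c0); rewrite addr_ge0 // mulr_ge0 // exp_sqmean_ge0.
transitivity (\int[lebesgue_measure]_(mu1 in [set: R])
                (K * I2 * quad_tail p1 q1 b1 c X1 mu1)%:E)%E.
  apply: eq_integral => mu1 _; under eq_integral => mu2 _ do rewrite FE.
  rewrite integral_quad_tail //; last by rewrite mulr_ge0 // quad_tail_ge0.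
  by congr EFin; rewrite /I2; ring.
rewrite integral_quad_tail //; last exact: mulr_ge0.
by congr EFin; ring.
Qed.

End ExponentialTail.

Lemma argmin_scaled_sqr {R : realDomainType} (K d c a : R) : 0 < K ->
  (forall b, K * (a - d) ^+ 2 + c <= K * (b - d) ^+ 2 + c) <-> a = d.
Proof.
move=> K0; split => [min_a | -> b]; last first.
  by rewrite subrr (expr2 0) !mulr0 lerD2r; exact: mulr_ge0 (ltW K0) (sqr_ge0 _).
have := min_a d; rewrite subrr (expr2 0) !mulr0 lerD2r pmulr_rle0 // => sq_le0.
by apply/eqP; rewrite -subr_eq0 -sqrf_eq0 eq_le sq_le0 sqr_ge0.
Qed.

Section SampleMinimum.
Context {R : realType}.
Implicit Types (n : nat) (x : nat -> R) (mu s : R).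

Lemma smin_le {n} x {j} : (j < n)%N -> smin n x <= x j.
Proof. by move=> jn; apply: ge_bigmin_seq; rewrite ?mem_index_iota. Qed.

Lemma le_smin n x mu : (0 < n)%N -> (forall j, (j < n)%N -> mu <= x j) -> mu <= smin n x.
Proof.
move=> n0 le_mu; rewrite /smin big_seq_cond; apply: le_bigmin => [|j].
  exact: le_mu.
by rewrite mem_index_iota andbT => /andP[_ /le_mu].
Qed.

Definition sdev n x : R := \sum_(0 <= j < n) (x j - smin n x).

Lemma prod_expdens n x mu s : (0 < n)%N -> 0 < s ->
  \prod_(0 <= j < n) expdens mu s (x j) =
  s^-1 ^+ n * expR (- (sdev n x / s)) * exp_tail (n%:R / s) (smin n x) mu.
Proof.
move=> n0 s0; have sN0 := lt0r_neq0 s0.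
rewrite /exp_tail; case: ifPn => [mu_le | mu_gt]; last first.
  have /hasP[j jn xj_lt] : has (fun j => x j < mu) (index_iota 0 n).
    apply: contraNT mu_gt => /hasPn no_lt; apply: le_smin => // j jn.
    by rewrite leNgt; apply: no_lt; rewrite mem_index_iota.
  by rewrite mulr0 (bigD1_seq j) ?iota_uniq //= {1}/expdens leNgt xj_lt mul0r.
rewrite (eq_big_nat _ _ (F2 := fun j => s^-1 * expR (- ((x j - mu) / s)))); last first.
  move=> j /andP[_ jn]; rewrite /expdens ifT //.
  exact: le_trans mu_le (smin_le x jn).
rewrite big_split /= prodr_const_nat subn0 -mulrA -expRD -expR_sum /sdev.
congr (_ * expR _).
have -> : \sum_(0 <= j < n) - ((x j - mu) / s) =
     \sum_(0 <= j < n) (- ((x j - smin n x) / s) + s^-1 * (mu - smin n x)).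
  by apply: eq_bigr => j _; field.
rewrite big_split /= sumr_const_nat subn0 sumrN -mulr_suml -mulr_natr.
by field.
Qed.

End SampleMinimum.

Section Posterior.
Context {R : realType} {k : nat} {x1 x2 : nat -> R}.
Local Notation n := k.+2.
Local Notation m := (k + k).+1. (* [m.+3 = 2 * n] *)
Local Notation X1 := (smin n x1).
Local Notation X2 := (smin n x2).
Local Notation S := (Sstat n x1 x2).
Local Notation Z := (Z2 n x1 x2).
Local Notation M := (marginal n x1 x2).
Local Notation delta := (delta_k2 n x1 x2).
Implicit Types (a b s : R).

(* [n%:R != 0] in the normal form produced by [field]. *)
Lemma natrn_neq0 : (2 + k%:R : R) != 0.
Proof. by rewrite lt0r_neq0 // ltr_pwDr // ler0n. Qed.

Lemma rate_gt0 {s} : 0 < s -> 0 < n%:R / s.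
Proof. by move=> s0; rewrite divr_gt0 // ltr0n. Qed.

Lemma lik_exp_tail (mu1 mu2 : R) s : 0 < s ->
  lik n x1 x2 mu1 mu2 s =
  ig_kernel S (n + n) s * exp_tail (n%:R / s) X1 mu1 * exp_tail (n%:R / s) X2 mu2.
Proof.
move=> s0; rewrite /lik !prod_expdens // ig_kernelE // exprD.
have -> : S = sdev n x1 + sdev n x2 by [].
have -> : - ((sdev n x1 + sdev n x2) / s) = - (sdev n x1 / s) + - (sdev n x2 / s) by ring.
by rewrite expRD; ring.
Qed.

Lemma integral_prior_lik s : 0 < s ->
  (\int[lebesgue_measure]_(mu1 in [set: R]) \int[lebesgue_measure]_(mu2 in [set: R])
     (prior mu1 mu2 s * lik n x1 x2 mu1 mu2 s)%:E =
   (n%:R^-2 * ig_kernel S m.+2 s)%:E)%E.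
Proof.
move=> s0; have sN0 := lt0r_neq0 s0; have nN0 := natrn_neq0.
rewrite (@integral2_quad_tail _ _ (s^-1 * ig_kernel S (n + n) s)
  1 0 0 X1 1 0 0 X2 (n%:R / s)) //.
-
  congr EFin; rewrite !ig_kernelE // !addSn !addnS !exprS.
  by field; rewrite sN0 nN0.
- exact: rate_gt0.
- by rewrite mulr_ge0 ?ig_kernel_ge0 // invr_ge0 ltW.
- by move=> mu1 mu2; rewrite /prior lik_exp_tail // /quad_tail; ring.
Qed.

Hypothesis S_gt0 : 0 < S.

Lemma marginal_value : M = n%:R^-2 * ig_mass S m.
Proof.
rewrite /marginal /param_integral.
under eq_integral => s /[!inE] s0 do rewrite integral_prior_lik //.
rewrite (ge0_integral_ig_comb S_gt0 m 0 0 (n%:R^-2)) /= ?mul0r ?add0r //.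
- by move=> s _; rewrite !mul0r !add0r.
- by move=> s _; rewrite mulr_ge0 ?ig_kernel_ge0 // invr_ge0 exprn_ge0.
Qed.

Lemma marginal_gt0 : 0 < M.
Proof. by rewrite marginal_value mulr_gt0 ?ig_mass_gt0 // invr_gt0 exprn_gt0 // ltr0n. Qed.

Lemma post_scale_ge0 {s} : 0 < s -> 0 <= s^-1 ^+ 3 * ig_kernel S (n + n) s / M.
Proof.
move=> s0; rewrite mulr_ge0 ?invr_ge0 ?(ltW marginal_gt0) // mulr_ge0 ?ig_kernel_ge0 //.
by rewrite exprn_ge0 // invr_ge0 ltW.
Qed.

Lemma integral_loss_posterior b s : 0 < s ->
  (\int[lebesgue_measure]_(mu1 in [set: R]) \int[lebesgue_measure]_(mu2 in [set: R])
     (loss n x1 x2 mu1 mu2 s b * posterior n x1 x2 mu1 mu2 s)%:E =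
   (s^-1 ^+ 3 * ig_kernel S (n + n) s / M
      * (exp_sqmean (n%:R / s) (b - Z) / (n%:R / s) ^+ 2))%:E)%E.
Proof.
move=> s0; have sN0 := lt0r_neq0 s0; have nN0 := natrn_neq0.
have MN0 := lt0r_neq0 marginal_gt0; have c0 := rate_gt0 s0.
have K0 := post_scale_ge0 s0.
rewrite /Z2; case: (leP X2 X1) => [le21 | lt12].
- rewrite (@integral2_quad_tail _ _ (s^-1 ^+ 3 * ig_kernel S (n + n) s / M)
    0 1 b X1 1 0 0 X2 (n%:R / s)) //.
    by congr EFin; field; rewrite sN0 nN0.
  move=> mu1 mu2; rewrite /loss /muM le21 /posterior /prior lik_exp_tail // /quad_tail.
  by field; rewrite sN0 MN0.
- rewrite (@integral2_quad_tail _ _ (s^-1 ^+ 3 * ig_kernel S (n + n) s / M)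
    1 0 0 X1 0 1 b X2 (n%:R / s)) //.
    by congr EFin; field; rewrite sN0 nN0.
  move=> mu1 mu2; rewrite /loss /muM leNgt lt12 /=.
  rewrite /posterior /prior lik_exp_tail // /quad_tail.
  by field; rewrite sN0 MN0.
Qed.

(* The denominator [ig_mass S m] is [n^2 * M], by [marginal_value]. *)
Definition post_risk b : R :=
  ((b - Z) ^+ 2 * ig_mass S m.+2 + 2 * (b - Z) / n%:R * ig_mass S m.+1
   + 2 / n%:R ^+ 2 * ig_mass S m) / ig_mass S m.

Lemma post_exp_lossE b : post_exp_loss n x1 x2 b = (post_risk b)%:E.
Proof.
have nN0 := natrn_neq0; have MN0 := lt0r_neq0 marginal_gt0.
rewrite /post_exp_loss /param_integral.
under eq_integral => s /[!inE] s0 do rewrite integral_loss_posterior //.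
rewrite (ge0_integral_ig_comb S_gt0 m ((b - Z) ^+ 2 / (n%:R ^+ 2 * M))
  (2 * (b - Z) / n%:R / (n%:R ^+ 2 * M)) (2 / n%:R ^+ 2 / (n%:R ^+ 2 * M))).
- congr EFin; rewrite /post_risk marginal_value; field.
  by rewrite lt0r_neq0 ?ig_mass_gt0.
- move=> s s0; have sN0 := lt0r_neq0 s0.
  rewrite !ig_kernelE // /exp_sqmean !addSn !addnS !exprS.
  by field; rewrite sN0 MN0 nN0.
- move=> s s0; have c0 := rate_gt0 s0.
  apply: mulr_ge0; first exact: post_scale_ge0.
  by rewrite divr_ge0 ?exp_sqmean_ge0 ?exprn_ge0 ?ltW.
Qed.

Lemma post_risk_sqr b :
  post_risk b = m.+2%:R * m.+1%:R / S ^+ 2 * (b - delta) ^+ 2 + post_risk delta.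
Proof.
have SN0 := lt0r_neq0 S_gt0; have LN0 := lt0r_neq0 (ig_mass_gt0 S_gt0 m).
rewrite /post_risk /delta_k2 (ig_massS S m.+1) (ig_massS S m).
move: (ig_mass S m) LN0 => L LN0.
have k0 : 0 <= k%:R :> R := ler0n _ _.
rewrite -!natr1 !natrD.
have h1 : (k%:R + 1 + 1 : R) != 0 by rewrite lt0r_neq0 //; lra.
have h2 : (2 * (k%:R + 1 + 1) - 1 : R) != 0 by rewrite lt0r_neq0 //; lra.
by field; rewrite LN0 h1 SN0 h2.
Qed.

Lemma post_exp_loss_argmin a :
  (forall b, (post_exp_loss n x1 x2 a <= post_exp_loss n x1 x2 b)%E) <-> a = delta.
Proof.
have K_gt0 : 0 < m.+2%:R * m.+1%:R / S ^+ 2 :> R.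
  by rewrite divr_gt0 ?exprn_gt0 // mulr_gt0 // ltr0n.
apply: iff_trans _ (argmin_scaled_sqr _ delta (post_risk delta) a K_gt0).
by split=> min_a b; have := min_a b;
  rewrite !post_exp_lossE lee_fin (post_risk_sqr a) (post_risk_sqr b).
Qed.

End Posterior.

Theorem theorem3p2 (R : realType) (n : nat) (x1 x2 : nat -> R) :
  (2 <= n)%N -> 0 < Sstat n x1 x2 ->
  forall a : R,
    (forall b : R, (post_exp_loss n x1 x2 a <= post_exp_loss n x1 x2 b)%E)
    <-> a = delta_k2 n x1 x2.
Proof.
case: n => [|[|k]] n_ge2 S_gt0 a; [by [] | by [] | exact: post_exp_loss_argmin S_gt0 a].
Qed.
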